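(* Let $\widehat{\mathbf Y}$ be an optimal solution of the SDP, $\gamma=\|\widehat{\mathbf Y}-\mathbf Y^*\|_1$, and $S_4=\langle\widehat{\mathbf Y}-\mathbf Y^*,\mathbb E\,\mathbf H\mathbf H^\top\rangle$. For $a,b\in[k]$ let $T_{ab}=\sum_{i\in C^*_a,\,j\in C^*_b}(\widehat{\mathbf Y}-\mathbf Y^* )_{ij}$. Then \[ S_4=-\frac12\sum_{a\ne b}T_{ab}\Delta_{ab}^2\le-\frac14\Delta^2\gamma. \]
   Context: Model: integers $n\ge 4$, $k\ge 2$ with $k\mid n$; centers $\boldsymbol\mu_1,\dots,\boldsymbol\mu_k\in\mathbb R^d$; labels $\sigma^*:[n]\to[k]$ with clusters $C^*_a=\{i:\sigma^*(i)=a\}$ of size $n/k$; observations $\mathbf h_i=\boldsymbol\mu_{\sigma^*(i)}+\mathbf g_i$ with $\mathbf g_i$ independent, mean-zero sub-Gaussian random vectors. $\mathbf H\in\mathbb R^{n\times d}$ has $i$-th row $\mathbf h_i^\top$. $\Delta_{ab}=\|\boldsymbol\mu_a-\boldsymbol\mu_b\|_2$, $\Delta=\min_{a\ne b}\Delta_{ab}$. SDP: $A_{ij}=\|\mathbf h_i-\mathbf h_j\|_2^2$; $\widehat{\mathbf Y}$ minimizes $\langle\mathbf Y,\mathbf A\rangle$ subject to $\mathbf Y\mathbf 1_n=\frac nk\mathbf 1_n$, $\mathbf Y\succeq0$, $\mathrm{diag}(\mathbf Y)=\mathbf 1_n$, $\mathbf Y\ge0$. $Y^*_{ij}=\mathbb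 1\{\sigma^*(i)=\sigma^*(j)\}$; $\|\cdot\|_1$ entrywise $\ell_1$ norm. *)

From HB Require Import structures.
From mathcomp Require Import all_boot all_order all_algebra.
From mathcomp Require Import all_classical all_reals all_analysis.
Set Implicit Arguments. Unset Strict Implicit. Unset Printing Implicit Defensive.
Import Order.TTheory GRing.Theory Num.Theory.
Import numFieldNormedType.Exports.
Local Open Scope classical_set_scope.
Local Open Scope ring_scope.

Section Defs.
Variables (R : realType) (n k d : nat).

Definition frob (Y A : 'M[R]_n) : R := \sum_(i < n) \sum_(j < n) Y i j * A i j.

Definition l1norm (Y : 'M[R]_n) : R := \sum_(i < n) \sum_(j < n) `|Y i j|.

Definition psd (Y : 'M[R]_n) : Prop :=
  Y^T = Y /\ forall x : 'cV[R]_n, 0 <= (x^T *m Y *m x) 0 0.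

Definition sdp_feasible (Y : 'M[R]_n) : Prop :=
  [/\ forall i, \sum_(j < n) Y i j = n%:R / k%:R,
      psd Y,
      forall i, Y i i = 1 &
      forall i j, 0 <= Y i j].

Definition sdp_optimal (A Y : 'M[R]_n) : Prop :=
  sdp_feasible Y /\ forall Y', sdp_feasible Y' -> frob Y A <= frob Y' A.

Definition Ystar (sigma : 'I_n -> 'I_k) : 'M[R]_n :=
  \matrix_(i, j) (sigma i == sigma j)%:R.

Definition sqdist (mu : 'I_k -> 'I_d -> R) (a b : 'I_k) : R :=
  \sum_(l < d) (mu a l - mu b l) ^+ 2.

Definition Dist (mu : 'I_k -> 'I_d -> R) (a b : 'I_k) : R :=
  Num.sqrt (sqdist mu a b).

(* Delta = min_{a != b} Delta_ab.  The iterated min is seeded with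
   max_{a,b} Delta_ab (an upper bound of all Delta_ab), so for k >= 2 this is
   exactly the minimum over pairs a != b. *)
Definition Dist_max (mu : 'I_k -> 'I_d -> R) : R :=
  \big[Num.max/0]_(a < k) \big[Num.max/0]_(b < k) Dist mu a b.
Definition Dist_min (mu : 'I_k -> 'I_d -> R) : R :=
  \big[Num.min/Dist_max mu]_(a < k) \big[Num.min/Dist_max mu]_(b < k | b != a)
     Dist mu a b.

Definition Tblock (sigma : 'I_n -> 'I_k) (D : 'M[R]_n) (a b : 'I_k) : R :=
  \sum_(i < n | sigma i == a) \sum_(j < n | sigma j == b) D i j.

End Defs.

Section Prob.
Variables (R : realType) (dT : measure_display) (T : measurableType dT)
          (P : probability T R) (n k d : nat).

Definition obs (mu : 'I_k -> 'I_d -> R) (sigma : 'I_n -> 'I_k)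
  (g : 'I_n -> 'I_d -> T -> R) (i : 'I_n) (l : 'I_d) (w : T) : R :=
  mu (sigma i) l + g i l w.

Definition Hmat mu sigma g (w : T) : 'M[R]_(n, d) :=
  \matrix_(i, l) obs mu sigma g i l w.

Definition Amat mu sigma g (w : T) : 'M[R]_n :=
  \matrix_(i, j) \sum_(l < d) (obs mu sigma g i l w - obs mu sigma g j l w) ^+ 2.

(* E[H H^T], entry (i,j) = E[<h_i, h_j>] (finite under the model assumptions) *)
Definition EHHt mu sigma g : 'M[R]_n :=
  \matrix_(i, j) fine ('E_P[fun w => (Hmat mu sigma g w *m (Hmat mu sigma g w)^T) i j])%E.

Definition rv_family (g : 'I_n -> 'I_d -> T -> R) : Prop :=
  forall i l, measurable_fun setT (g i l).

Definition mean_zero (g : 'I_n -> 'I_d -> T -> R) : Prop :=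
  forall i l, ('E_P[g i l] = 0)%E.

Definition gen_sigma (g : 'I_n -> 'I_d -> T -> R) (i : 'I_n) : set (set T) :=
  <<s [set A | exists l B, measurable B /\ A = g i l @^-1` B] >>.

Definition independent_vectors (g : 'I_n -> 'I_d -> T -> R) : Prop :=
  forall A : 'I_n -> set T, (forall i, gen_sigma g i (A i)) ->
    P (\bigcap_(i in setT) A i) = (\prod_(i < n) P (A i))%E.

(* sub-Gaussian random vector: all one-dimensional marginals <u, X>, ||u|| = 1,
   have psi_2 norm at most some K > 0 *)
Definition subgaussian_vec (X : 'I_d -> T -> R) : Prop :=
  exists K : R, 0 < K /\
    forall u : 'I_d -> R, \sum_(l < d) u l ^+ 2 = 1 ->
      ('E_P[fun w => expR ((\sum_(l < d) u l * X l w) ^+ 2 / K ^+ 2)] <= 2%:E)%E.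

End Prob.

From HB Require Import structures.
From mathcomp Require Import all_boot all_order all_algebra.
From mathcomp Require Import all_classical all_reals all_analysis.
From mathcomp Require Import measurable_realfun ring lra.
Import Order.TTheory GRing.Theory Num.Theory.

(* Off the diagonal, E[H H^T] is the Gram matrix of the centers,
   E<h_i, h_j> = <mu_(sigma i), mu_(sigma j)>, because the noise vectors are
   independent, centred and square integrable.  The deviation D = Yh - Y* has
   zero diagonal and zero row and column sums, so pairing it with that Gram
   matrix gives -1/2 times its pairing with the squared center distances: the
   squared norms in ||mu_a - mu_b||^2 = |mu_a|^2 + |mu_b|^2 - 2 <mu_a, mu_b>
   are killed by the row and column sums.  Since Yh_ij <= 1 by positive
   semidefiniteness, D is <= 0 inside clusters and >= 0 across them; as its
   total sum vanishes, ||D||_1 is twice the mass of D across clusters, and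
   bounding each Delta_ab below by Delta gives the inequality. *)

Set Implicit Arguments.
Unset Strict Implicit.
Unset Printing Implicit Defensive.

Local Open Scope ring_scope.

Lemma psd_sym (R : realType) (n : nat) (Y : 'M[R]_n) (i j : 'I_n) :
  psd Y -> Y j i = Y i j.
Proof. by case=> YT _; rewrite -[in LHS]YT mxE. Qed.

Lemma psd_entry_le (R : realType) (n : nat) (Y : 'M[R]_n) (i j : 'I_n) :
  psd Y -> 2 * Y i j <= Y i i + Y j j.
Proof.
have quad a b : (delta_mx a 0 : 'cV_n)^T *m Y *m delta_mx b 0 = (Y a b)%:M.
  by rewrite trmx_delta -rowE -colE; apply/matrixP => r c; rewrite !ord1 !mxE.
move=> /[dup] /psd_sym Ysym [_ /(_ (delta_mx i 0 - delta_mx j 0))].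
rewrite mulmxBr raddfB /= !mulmxBl !quad !mxE /= Ysym; lra.
Qed.

Lemma sdp_feasible_le1 (R : realType) (n k : nat) (Y : 'M[R]_n) (i j : 'I_n) :
  sdp_feasible k Y -> Y i j <= 1.
Proof. by case=> _ /(psd_entry_le i j) + diag1 _; rewrite !diag1; lra. Qed.

Lemma sum_sqdist_centered (R : comRingType) (n d : nat) (D : 'M[R]_n)
    (v : 'I_n -> 'I_d -> R) :
  (forall i, \sum_j D i j = 0) -> (forall j, \sum_i D i j = 0) ->
  \sum_i \sum_j D i j * \sum_l (v i l - v j l) ^+ 2 =
  - 2 * \sum_i \sum_j D i j * \sum_l v i l * v j l.
Proof.
move=> row0 col0; pose N i := \sum_l v i l ^+ 2.
have expand i j : \sum_l (v i l - v j l) ^+ 2 = N i + N j - 2 * \sum_l v i l * v j l.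
  have sqrB l : (v i l - v j l) ^+ 2 = v i l ^+ 2 + v j l ^+ 2 - 2 * (v i l * v j l).
    by ring.
  by under eq_bigr do rewrite sqrB; rewrite sumrB big_split mulr_sumr.
have rowN : \sum_i \sum_j D i j * N i = 0.
  by apply: big1 => i _; rewrite -mulr_suml row0 mul0r.
have colN : \sum_i \sum_j D i j * N j = 0.
  by rewrite exchange_big; apply: big1 => j _; rewrite -mulr_suml col0 mul0r.
under eq_bigr => i _ do under eq_bigr => j _ do
  rewrite expand mulrBr mulrDr mulrCA.
under eq_bigr do rewrite sumrB big_split /=.
rewrite sumrB big_split /= rowN colN add0r sub0r mulNr mulr_sumr.
by congr (- _); apply: eq_bigr => i _; rewrite mulr_sumr.
Qed.

Lemma sum_Tblock (R : realType) (n k : nat) (sigma : 'I_n -> 'I_k) (D : 'M[R]_n)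
    (F : 'I_k -> 'I_k -> R) :
  \sum_a \sum_b Tblock sigma D a b * F a b =
  \sum_i \sum_j D i j * F (sigma i) (sigma j).
Proof.
rewrite [RHS](partition_big sigma xpredT) //=; apply: eq_bigr => a _.
under [RHS]eq_bigr => i /eqP -> do rewrite (partition_big sigma xpredT) //=.
rewrite exchange_big; apply: eq_bigr => b _; rewrite mulr_suml.
apply: eq_bigr => i _; rewrite mulr_suml; apply: eq_bigr => j /eqP -> //.
Qed.

Section Centers.
Variables (R : realType) (k d : nat) (mu : 'I_k -> 'I_d -> R).

Lemma Dist_sqr a b : Dist mu a b ^+ 2 = sqdist mu a b.
Proof. by rewrite sqr_sqrtr // sumr_ge0 // => l _; rewrite sqr_ge0. Qed.

Lemma Dist_ge0 a b : 0 <= Dist mu a b.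
Proof. exact: sqrtr_ge0. Qed.

Lemma Dist_xx a : Dist mu a a = 0.
Proof. by rewrite /Dist /sqdist big1 ?sqrtr0 // => l _; rewrite subrr expr0n. Qed.

Lemma Dist_min_ge0 : 0 <= Dist_min mu.
Proof.
have Dist_max_ge0 : 0 <= Dist_max mu by apply: bigmax_ge_id.
by apply: le_bigmin => // a _; apply: le_bigmin => // b _; apply: Dist_ge0.
Qed.

Lemma Dist_min_le a b : b != a -> Dist_min mu <= Dist mu a b.
Proof.
move=> ne_ba; rewrite /Dist_min (bigminD1 a) // ge_min; apply/orP; left.
by rewrite (bigminD1 b) // ge_min lexx.
Qed.

End Centers.

Section Deviation.
Variables (R : realType) (n k d : nat) (sigma : 'I_n -> 'I_k) (Y : 'M[R]_n).
Variable mu : 'I_k -> 'I_d -> R.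
Hypotheses (k_gt0 : (0 < k)%N) (k_dvd_n : (k %| n)%N).
Hypothesis balanced : forall a, #|[set i | sigma i == a]| = (n %/ k)%N.
Hypothesis feasY : sdp_feasible k Y.

Local Notation D := (Y - Ystar R sigma).

Lemma Ystar_row_sum i : \sum_j Ystar R sigma i j = n%:R / k%:R.
Proof.
rewrite -[n%:R](congr1 (GRing.natmul 1) (divnK k_dvd_n)) natrM mulfK ?pnatr_eq0 -?lt0n //.
rewrite -(balanced (sigma i)) cardsE -sumr_const [RHS]big_mkcond.
apply: eq_bigr => j _; rewrite mxE eq_sym -[_ \in _]/(sigma j == sigma i).
by case: (_ == _).
Qed.

Lemma dev_entry i j : D i j = Y i j - Ystar R sigma i j.
Proof. by rewrite !mxE. Qed.

Lemma dev_diag i : D i i = 0.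
Proof. by case: feasY => _ _ diag1 _; rewrite !mxE diag1 eqxx subrr. Qed.

Lemma dev_sym i j : D j i = D i j.
Proof. by case: feasY => _ /(psd_sym i j) Ysym _ _; rewrite !mxE Ysym eq_sym. Qed.

Lemma dev_row_sum i : \sum_j D i j = 0.
Proof.
case: feasY => rowY _ _ _; under eq_bigr do rewrite dev_entry.
by rewrite sumrB rowY Ystar_row_sum subrr.
Qed.

Lemma dev_col_sum j : \sum_i D i j = 0.
Proof. by under eq_bigr do rewrite -dev_sym; exact: dev_row_sum. Qed.

Lemma dev_within i j : sigma i = sigma j -> D i j <= 0.
Proof.
by move=> eq_ij; rewrite !mxE eq_ij eqxx subr_le0; apply: sdp_feasible_le1 feasY.
Qed.

Lemma dev_across i j : sigma i != sigma j -> 0 <= D i j.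
Proof. by case: feasY => _ _ _ Yge0 ne_ij; rewrite !mxE (negbTE ne_ij) subr0. Qed.

Lemma l1norm_dev : l1norm D = 2 * \sum_i \sum_(j | sigma i != sigma j) D i j.
Proof.
transitivity (\sum_i \sum_j (2 * (if sigma i != sigma j then D i j else 0) - D i j)).
  apply: eq_bigr => i _; apply: eq_bigr => j _.
  have [eq_ij|ne_ij] := eqVneq (sigma i) (sigma j).
    by rewrite ler0_norm ?dev_within //= mulr0 sub0r.
  by rewrite ger0_norm ?dev_across //= mulr_natl mulr2n addrK.
under eq_bigr do rewrite sumrB dev_row_sum subr0 -mulr_sumr -big_mkcond.
by rewrite -mulr_sumr.
Qed.

Lemma frob_dev_gram (E : 'M[R]_n) :
  (forall i j, i != j -> E i j = \sum_l mu (sigma i) l * mu (sigma j) l) ->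
  frob D E = - (1 / 2) * \sum_a \sum_(b | b != a) Tblock sigma D a b * Dist mu a b ^+ 2.
Proof.
move=> E_off.
have frobE : frob D E = \sum_i \sum_j D i j * \sum_l mu (sigma i) l * mu (sigma j) l.
  apply: eq_bigr => i _; apply: eq_bigr => j _.
  by have [->|ne_ij] := eqVneq i j; rewrite ?dev_diag ?mul0r ?E_off.
have drop_diag : \sum_a \sum_(b | b != a) Tblock sigma D a b * Dist mu a b ^+ 2 =
                 \sum_a \sum_b Tblock sigma D a b * Dist mu a b ^+ 2.
  by apply: eq_bigr => a _; rewrite [RHS](bigD1 a) //= Dist_xx expr0n mulr0 add0r.
rewrite drop_diag sum_Tblock.
under eq_bigr do under eq_bigr do rewrite Dist_sqr.
rewrite (sum_sqdist_centered (fun i l => mu (sigma i) l) dev_row_sum dev_col_sum).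
by rewrite -frobE; lra.
Qed.

Lemma l1norm_dev_le :
  Dist_min mu ^+ 2 * l1norm D <=
  2 * \sum_a \sum_(b | b != a) Tblock sigma D a b * Dist mu a b ^+ 2.
Proof.
have masked : \sum_a \sum_(b | b != a) Tblock sigma D a b * Dist mu a b ^+ 2 =
    \sum_i \sum_j D i j * (if sigma i != sigma j then Dist mu (sigma i) (sigma j) ^+ 2 else 0).
  rewrite -(sum_Tblock sigma D (fun a b => if a != b then Dist mu a b ^+ 2 else 0)).
  apply: eq_bigr => a _; rewrite big_mkcond; apply: eq_bigr => b _.
  by rewrite eq_sym; case: ifP; rewrite ?mulr0.
rewrite masked l1norm_dev mulrCA ler_wpM2l // mulr_sumr; apply: ler_sum => i _.
rewrite mulr_sumr big_mkcond; apply: ler_sum => j _.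
case: ifP => [ne_ij|_]; last by rewrite mulr0.
rewrite mulrC ler_wpM2l ?dev_across // lerXn2r ?nnegrE ?Dist_min_ge0 ?Dist_ge0 //.
by apply: Dist_min_le; rewrite eq_sym.
Qed.

End Deviation.

Local Open Scope classical_set_scope.

Section independent_product.
Local Open Scope ereal_scope.
Context d (T : measurableType d) (R : realType) (P : probability T R).

(* Fubini on the joint law of (X, Y), which independence identifies with the
   product of the two marginal laws. *)
Lemma expectationM_indep (X Y : {RV P >-> R}) :
  (forall B C, measurable B -> measurable C ->
     P (X @^-1` B `&` Y @^-1` C) = P (X @^-1` B) * P (Y @^-1` C)) ->
  (X : T -> R) \in Lfun P 1 -> (Y : T -> R) \in Lfun P 1 -> (X \* Y)%R \in Lfun P 1 ->
  'E_P[X \* Y] = 'E_P[X] * 'E_P[Y].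
Proof.
move=> indep LX LY /Lfun1_integrable iXY.
have mZ := measurable_fun_pair (measurable_funP X) (measurable_funP Y).
pose Z : {RV P >-> (R * R)%type} := mfun_Sub (mem_set mZ).
pose f (z : (R * R)%type) := (z.1 * z.2)%R%:E.
have mf : measurable_fun [set: (R * R)%type] f.
  by apply: measurableT_comp => //; exact: measurable_funM.
have distZ A : measurable A -> A `<=` setT ->
    distribution P Z A = (distribution P X \x distribution P Y) A.
  by move=> mA _; apply/esym/product_measure_unique.
have ifZ : (distribution P Z).-integrable setT f.
  by apply: integrable_pushforward; rewrite ?preimage_setT.
have iprod : (distribution P X \x distribution P Y).-integrable setT f.
  move/integrableP: ifZ => [_ finZ]; apply/integrableP; split => //.
  by rewrite -(eq_measure_integral _ distZ).
have ipush (V : {RV P >-> R}) : (V : T -> R) \in Lfun P 1 ->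
    (distribution P V).-integrable setT EFin.
  by move=> /Lfun1_integrable LV; apply: integrable_pushforward; rewrite ?preimage_setT.
have Epush (V : {RV P >-> R}) : (V : T -> R) \in Lfun P 1 ->
    \int[distribution P V]_v v%:E = 'E_P[V].
  by move=> /Lfun1_integrable LV; rewrite unlock integral_distribution.
have EZ : 'E_P[X \* Y] = \int[distribution P Z]_z f z.
  by rewrite unlock integral_distribution.
rewrite EZ (eq_measure_integral _ distZ) -(integral12_prod_meas1 iprod) /fubini_F /f /=.
under eq_integral => x _.
  under eq_integral do rewrite EFinM.
  rewrite integralZl ?ipush // Epush // -(fineK (expectation_fin_num LY)).
  over.
by rewrite integralZr ?ipush // Epush // fineK // expectation_fin_num.
Qed.

End independent_product.

Lemma Lfun2_of_integrable_sqr d (T : measurableType d) (R : realType)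
    (mu : {measure set T -> \bar R}) (f : T -> R) :
  measurable_fun setT f -> mu.-integrable setT (EFin \o (fun x => f x ^+ 2)) ->
  f \in Lfun mu 2%:E.
Proof.
move=> mf /integrableP[_ fin2]; rewrite inE; apply/andP; split; rewrite inE //=.
rewrite /finite_norm unlock /Lnorm poweR_lty //.
by under eq_integral => x _ do rewrite /= powR_mulrn // -normrX.
Qed.

Lemma subgaussian_vec_Lfun2 (R : realType) (dT : measure_display) (T : measurableType dT)
    (P : probability T R) (d : nat) (X : 'I_d -> T -> R) (l : 'I_d) :
  measurable_fun setT (X l) -> subgaussian_vec P X -> X l \in Lfun P 2%:E.
Proof.
move=> mXl [K [K_gt0 psi2]].
(* The psi_2 condition along the unit vector e_l, with x <= exp x, bounds
   E[X_l^2 / K^2]. *)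
pose e l' : R := (l' == l)%:R.
have coord (u : 'I_d -> R) : \sum_l' e l' * u l' = u l.
  by rewrite (bigD1 l) //= /e eqxx mul1r big1 ?addr0 // => j /negbTE ->; rewrite mul0r.
have /psi2 : \sum_l' e l' ^+ 2 = 1.
  rewrite -[RHS](coord (fun=> 1)); apply: eq_bigr => j _.
  by rewrite mulr1 /e; case: (j == l); rewrite ?expr1n ?expr0n.
rewrite unlock; under eq_integral do rewrite coord; move=> expE.
have mq : measurable_fun setT (fun w => X l w ^+ 2 / K ^+ 2).
  by apply: measurable_funM => //; exact: measurable_funX.
have iq : P.-integrable setT (EFin \o (fun w => X l w ^+ 2 / K ^+ 2)).
  apply/integrableP; split; first exact: measurableT_comp.
  apply: le_lt_trans (le_lt_trans expE (ltry _)).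
  apply: ge0_le_integral => //.
  - by do 2 apply: measurableT_comp => //.
  - by apply: measurableT_comp => //; apply: measurableT_comp => //; exact: measurable_expR.
  - move=> w _ /=; rewrite lee_fin ger0_norm ?divr_ge0 ?sqr_ge0 //.
    by apply: le_trans (expR_ge1Dx _); rewrite lerDr.
apply: Lfun2_of_integrable_sqr => //.
have -> : EFin \o (fun w => X l w ^+ 2) = (fun w => (K ^+ 2)%:E * (X l w ^+ 2 / K ^+ 2)%:E)%E.
  by apply/funext => w; rewrite /= -EFinM mulrC divfK // expf_neq0 // gt_eqF.
exact: integrableZl.
Qed.

Section shifted_product.
Local Open Scope ereal_scope.
Context d (T : measurableType d) (R : realType) (P : probability T R).
Variables (a b : R) (X Y : T -> R).
Hypotheses (LX : X \in Lfun P 1) (LY : Y \in Lfun P 1) (LXY : (X \* Y)%R \in Lfun P 1).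

Let shift_mulE : (fun w => (a + X w) * (b + Y w))%R =
  (cst (a * b) \+ a \o* Y \+ b \o* X \+ X \* Y)%R.
Proof. by apply/funext => w /=; ring. Qed.

Lemma Lfun1_shift_mul : (fun w => (a + X w) * (b + Y w))%R \in Lfun P 1.
Proof. by rewrite shift_mulE !rpredD ?Lfun_cst ?Lfun_scale. Qed.

Lemma expectation_shift_mul : 'E_P[fun w => (a + X w) * (b + Y w)]%R =
  (a * b)%:E + a%:E * 'E_P[Y] + b%:E * 'E_P[X] + 'E_P[X \* Y].
Proof.
by rewrite shift_mulE !expectationD ?expectation_cst ?expectationZl ?rpredD ?Lfun_cst ?Lfun_scale.
Qed.

End shifted_product.

Lemma independent_vectors_coord (R : realType) (dT : measure_display)
    (T : measurableType dT) (P : probability T R) (n d : nat)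
    (g : 'I_n -> 'I_d -> T -> R) (i j : 'I_n) (l l' : 'I_d) :
  independent_vectors P g -> i != j -> forall B C, measurable B -> measurable C ->
  (P (g i l @^-1` B `&` g j l' @^-1` C) = P (g i l @^-1` B) * P (g j l' @^-1` C))%E.
Proof.
move=> indep ne_ij B C mB mC; have ne_ji : (j == i) = false by rewrite eq_sym (negbTE ne_ij).
pose A m := if m == i then g i l @^-1` B else if m == j then g j l' @^-1` C else setT.
have sigmaA m : gen_sigma g m (A m).
  rewrite /A; case: ifPn => [/eqP ->|_]; first by apply: sub_sigma_algebra; exists l, B.
  case: ifPn => [/eqP ->|_]; first by apply: sub_sigma_algebra; exists l', C.
  by rewrite -(setD0 setT); apply: sigma_algebraCD; exact: sigma_algebra0.
have bigcapA : \bigcap_(m in setT) A m = g i l @^-1` B `&` g j l' @^-1` C.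
  apply/seteqP; split => [w Aw|w [Bw Cw] m _].
    by split; [have := Aw i I | have := Aw j I]; rewrite /A ?eqxx ?ne_ji ?eqxx.
  by rewrite /A; do 2 case: ifP => //.
rewrite -bigcapA indep // (bigD1 i) //= (bigD1 j) 1?eq_sym //= big1 ?mule1.
  by rewrite /A eqxx ne_ji eqxx.
by move=> m /andP[/negbTE mi /negbTE mj]; rewrite /A mi mj probability_setT.
Qed.

Lemma EHHt_offdiag (R : realType) (dT : measure_display) (T : measurableType dT)
    (P : probability T R) (n k d : nat) (mu : 'I_k -> 'I_d -> R)
    (sigma : 'I_n -> 'I_k) (g : 'I_n -> 'I_d -> T -> R) (i j : 'I_n) :
  rv_family g -> mean_zero P g -> independent_vectors P g ->
  (forall i, subgaussian_vec P (g i)) -> i != j ->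
  EHHt P mu sigma g i j = \sum_l mu (sigma i) l * mu (sigma j) l.
Proof.
move=> rvg mean0 indep subg ne_ij.
have L2 m l : g m l \in Lfun P 2%:E by apply: subgaussian_vec_Lfun2.
have L1 m l : g m l \in Lfun P 1.
  by apply: (Lfun_subset12 _ (L2 m l)); rewrite fin_num_measure.
have L11 l : (g i l \* g j l)%R \in Lfun P 1 by apply: Lfun2_mul_Lfun1.
have Emul l : ('E_P[g i l \* g j l] = 0)%E.
  pose X : {RV P >-> R} := mfun_Sub (mem_set (rvg i l)).
  pose Y : {RV P >-> R} := mfun_Sub (mem_set (rvg j l)).
  have := @expectationM_indep _ _ _ P X Y (independent_vectors_coord l l indep ne_ij).
  by move=> -> //=; rewrite (mean0 j l) mule0.
pose F l w := (mu (sigma i) l + g i l w) * (mu (sigma j) l + g j l w).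
have entry w : (Hmat mu sigma g w *m (Hmat mu sigma g w)^T) i j = \sum_l F l w.
  by rewrite !mxE; apply: eq_bigr => l _; rewrite !mxE.
have EF l : ('E_P[F l] = (mu (sigma i) l * mu (sigma j) l)%:E)%E.
  by rewrite expectation_shift_mul // !mean0 Emul !mule0 !adde0.
rewrite /EHHt mxE unlock; under eq_integral do rewrite entry -sumEFin.
rewrite integral_sum // => [|l]; last exact/Lfun1_integrable/Lfun1_shift_mul.
rewrite unlock in EF; under eq_bigr do rewrite EF.
by rewrite sumEFin.
Qed.

Local Close Scope classical_set_scope.

Theorem proposition9 (R : realType) (dT : measure_display) (T : measurableType dT)
  (P : probability T R) (n k d : nat)
  (mu : 'I_k -> 'I_d -> R) (sigma : 'I_n -> 'I_k) (g : 'I_n -> 'I_d -> T -> R) :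
  (4 <= n)%N -> (2 <= k)%N -> (k %| n)%N ->
  (forall a : 'I_k, #|[set i | sigma i == a]| = (n %/ k)%N) ->
  rv_family g -> mean_zero P g -> independent_vectors P g ->
  (forall i, subgaussian_vec P (g i)) ->
  forall (w : T) (Yh : 'M[R]_n),
    sdp_optimal k (Amat mu sigma g w) Yh ->
    let D := Yh - Ystar R sigma in
    let gamma := l1norm D in
    let S4 := frob D (EHHt P mu sigma g) in
    S4 = - (1 / 2) * \sum_(a < k) \sum_(b < k | b != a) Tblock sigma D a b * Dist mu a b ^+ 2
    /\ - (1 / 2) * \sum_(a < k) \sum_(b < k | b != a) Tblock sigma D a b * Dist mu a b ^+ 2
       <= - (1 / 4) * Dist_min mu ^+ 2 * gamma.
Proof.
move=> _ k_ge2 k_dvd_n balanced rvg mean0 indep subg w Yh [feasY _] D gamma S4.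
have k_gt0 : (0 < k)%N by apply: leq_trans k_ge2.
split.
  by apply: (frob_dev_gram k_gt0 k_dvd_n balanced feasY) => i j; exact: EHHt_offdiag.
have := l1norm_dev_le mu k_gt0 k_dvd_n balanced feasY; rewrite -/D -/gamma.
lra.
Qed.
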